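(* Suppose $\mathcal U$ is strongly stable with parameters $b>0$, $q\ge1$ (and $a>0$). Then $\mathcal U$ is $L$-Lipschitz on $\mathcal D^\Delta$, i.e. $|\mathcal U(F_1)-\mathcal U(F_2)|\le L\|F_1-F_2\|$ for all $F_1,F_2\in\mathcal D^\Delta$, with $L=b\bigl(1+\max_{i,j\in\mathbb K}\|F^{(i)}-F^{(j)}\|^{q-1}\bigr)$.
   Context: Let $K\ge1$, $\mathbb K=\{1,\dots,K\}$, and let $F^{(1)},\dots,F^{(K)}$ be distribution functions on $\mathbb R$ (the reward distributions of $K$ arms; arm $i$ produces i.i.d. rewards $X^{(i)}_1,X^{(i)}_2,\dots$ with distribution $F^{(i)}$). Let $\hat F^{(i)}_t(y)=\frac1t\sum_{s=1}^t\mathbf 1\{X^{(i)}_s\le y\}$, and let $\hat{\mathcal D}$ be the set of empirical distribution functions $y\mapsto\frac1t\sum_{s\le t}\mathbf 1\{x_s\le y\}$ of all finite real sequences $x_1,\dots,x_t$, $t\ge1$. $\Delta_{K-1}$ is the probability simplex, $F_p=\sum_ip_iF^{(i)}$, $\mathcal D^\Delta=\{F_p:p\in\Delta_{K-1}\}$. $(L,\|\cdot\|)$ is a Banach space of bounded functions on $\mathbb R$ containing $\mathcal D^\Delta\cup\hat{\mathcal D}$, and $\mathcal U:L\to\mathbb R$. $\mathcal U$ is strongly stable if (1) there exist $b>0,q\ge1$ with $|\mathcal U(F)-\mathcal U(G)|\le b(\|F-G\|+\|F-G\|^q)$ for all $F\in\mathcal D^\Delta$, $G\in\mathcal D^\Delta\cup\hat{\mathcal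 D}$, and (2) there is $a>0$ with $\mathbb P(\|\hat F^{(i)}_t-F^{(i)}\|\ge x)\le2\exp(-atx^2)$ for all $i$, $x>0$, $t\ge1$. *)

From HB Require Import structures.
From mathcomp Require Import all_boot all_order all_algebra.
From mathcomp Require Import all_classical all_reals all_analysis.
Set Implicit Arguments. Unset Strict Implicit. Unset Printing Implicit Defensive.
Import Order.TTheory GRing.Theory Num.Theory.
Import numFieldNormedType.Exports.
Local Open Scope classical_set_scope.
Local Open Scope ring_scope.

Definition is_cdf (R : realType) (F : R -> R) : Prop :=
  {homo F : x y / x <= y} /\
  (forall x : R, F y @[y --> x^'+] --> F x) /\
  (F y @[y --> -oo] --> (0:R)) /\
  (F y @[y --> +oo] --> (1:R)).

Definition in_simplex (R : realType) (K : nat) (p : 'I_K -> R) : Prop :=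
  (forall i, 0 <= p i) /\ \sum_(i < K) p i = 1.

Definition Fmix (R : realType) (K : nat) (F : 'I_K -> R -> R) (p : 'I_K -> R)
  : R -> R := fun y => \sum_(i < K) p i * F i y.

Definition ecdf (R : realType) (t : nat) (x : nat -> R) : R -> R :=
  fun y => t%:R^-1 * \sum_(s < t) (((x s <= y)%R)%:R : R).

Definition iid_with_cdf (R : realType) (d : measure_display) (T : measurableType d)
  (P : probability T R) (X : nat -> T -> R) (F : R -> R) : Prop :=
  (forall s, measurable_fun setT (X s)) /\
  (forall (t : nat) (y : 'I_t -> R),
     P [set w | forall s : 'I_t, X s w <= y s] = (\prod_(s < t) F (y s))%:E).

(* Linearity and injectivity of iota identify the mixture F_p with
   sum_i p_i g_i, so the difference of two mixtures is the double convex
   combination sum_(i,j) p_i p'_j (g_i - g_j), of norm at most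
   delta := max_(i,j) |g_i - g_j|.  Writing |v1 - v2|^q as
   |v1 - v2| |v1 - v2|^(q-1) <= |v1 - v2| delta^(q-1), condition (1) of strong
   stability becomes the Lipschitz bound. *)
From HB Require Import structures.
From mathcomp Require Import all_boot all_order all_algebra.
From mathcomp Require Import all_classical all_reals all_analysis.
Set Implicit Arguments. Unset Strict Implicit. Unset Printing Implicit Defensive.
Import Order.TTheory GRing.Theory Num.Theory.
Import numFieldNormedType.Exports.
Local Open Scope classical_set_scope.
Local Open Scope ring_scope.

Section MixtureRepresentation.
Variables (R : realType) (K : nat) (V : lmodType R) (iota : V -> R -> R).
Variables (F : 'I_K -> R -> R) (g : 'I_K -> V).
Hypothesis iota_add : forall u v y, iota (u + v) y = iota u y + iota v y.
Hypothesis iota_scale : forall (c : R) v y, iota (c *: v) y = c * iota v y.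
Hypothesis iota_inj : injective iota.
Hypothesis hg : forall i, iota (g i) = F i.

Lemma iota0 y : iota 0 y = 0.
Proof. by rewrite -(scale0r (0 : V)) iota_scale mul0r. Qed.

Lemma iota_sum (f : 'I_K -> V) y :
  iota (\sum_i f i) y = \sum_i iota (f i) y.
Proof. exact: (big_morph (iota^~ y) (fun u v => iota_add u v y) (iota0 y)). Qed.

Lemma mixture_representation (v : V) (p : 'I_K -> R) :
  iota v = Fmix F p -> v = \sum_i p i *: g i.
Proof.
move=> ev; apply: iota_inj; rewrite ev; apply/funext => y.
by rewrite iota_sum; apply: eq_bigr => i _; rewrite iota_scale hg.
Qed.

End MixtureRepresentation.

Section MixtureDifference.
Variables (R : realType) (K : nat) (p p' : 'I_K -> R).
Hypotheses (hp : in_simplex p) (hp' : in_simplex p').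

Lemma mixture_diffE (V : lmodType R) (g : 'I_K -> V) :
  \sum_i p i *: g i - \sum_j p' j *: g j =
  \sum_i \sum_j (p i * p' j) *: (g i - g j).
Proof.
have [_ sum_p] := hp; have [_ sum_p'] := hp'; apply/esym.
under eq_bigr => i _ do (under eq_bigr => j _ do rewrite scalerBr;
  rewrite sumrB).
rewrite sumrB; congr (_ - _).
  apply: eq_bigr => i _.
  by rewrite -scaler_suml -mulr_sumr sum_p' mulr1.
rewrite exchange_big /=; apply: eq_bigr => j _.
by rewrite -scaler_suml -mulr_suml sum_p mul1r.
Qed.

Lemma norm_mixture_diff_le (V : normedModType R) (g : 'I_K -> V) (D : R) :
  (forall i j, `|g i - g j| <= D) ->
  `|\sum_i p i *: g i - \sum_j p' j *: g j| <= D.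
Proof.
move=> gD; have [p_ge0 sum_p] := hp; have [p'_ge0 sum_p'] := hp'.
rewrite mixture_diffE; apply: le_trans (ler_norm_sum _ _ _) _.
apply: (@le_trans _ _ (\sum_i \sum_j (p i * p' j) * D)).
  apply: ler_sum => i _; apply: le_trans (ler_norm_sum _ _ _) _.
  apply: ler_sum => j _; have pp'_ge0 : 0 <= p i * p' j by rewrite mulr_ge0.
  by rewrite normrZ ger0_norm //; apply: ler_wpM2l.
under eq_bigr => i _ do rewrite -mulr_suml -mulr_sumr sum_p' mulr1.
by rewrite -mulr_suml sum_p mul1r.
Qed.

End MixtureDifference.

Lemma addr_powR_le_mul (R : realType) (x q M : R) :
  0 <= x -> 1 <= q -> x `^ (q - 1) <= M -> x + x `^ q <= (1 + M) * x.
Proof.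
move=> x_ge0 q_ge1 xM.
rewrite -(mulr_powRB1 x_ge0 (lt_le_trans ltr01 q_ge1)) mulrDl mul1r lerD2l.
by rewrite [M * x]mulrC; apply: ler_wpM2l.
Qed.

Theorem lemma15
  (R : realType) (K : nat) (hK : (1 <= K)%N)
  (F : 'I_K -> R -> R) (hF : forall i, is_cdf (F i))
  (* the Banach space L, realized as a complete normed space V whose elements
     are (via the injective linear map iota) bounded functions on R *)
  (V : completeNormedModType R) (iota : V -> R -> R)
  (iota_add : forall u v y, iota (u + v) y = iota u y + iota v y)
  (iota_scale : forall (c : R) v y, iota (c *: v) y = c * iota v y)
  (iota_inj : injective iota)
  (iota_bdd : forall v, exists M : R, forall y, `|iota v y| <= M)
  (hDelta : forall p, in_simplex p -> exists v, iota v = Fmix F p)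
  (hHat : forall (t : nat) (x : nat -> R), (0 < t)%N -> exists v, iota v = ecdf t x)
  (U : V -> R)
  (* the elements of L representing F^(1), ..., F^(K) *)
  (g : 'I_K -> V) (hg : forall i, iota (g i) = F i)
  (* rewards of the arms on a probability space *)
  (d : measure_display) (T : measurableType d) (P : probability T R)
  (X : 'I_K -> nat -> T -> R) (hX : forall i, iid_with_cdf P (X i) (F i))
  (* strong stability, condition (1) *)
  (b q : R) (hb : 0 < b) (hq : 1 <= q)
  (stab1 : forall v1 v2 : V,
      (exists p, in_simplex p /\ iota v1 = Fmix F p) ->
      ((exists p, in_simplex p /\ iota v2 = Fmix F p) \/
       (exists (t : nat) (x : nat -> R), (0 < t)%N /\ iota v2 = ecdf t x)) ->
      `|U v1 - U v2| <= b * (`|v1 - v2| + `|v1 - v2| `^ q))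
  (* strong stability, condition (2) *)
  (a : R) (ha : 0 < a)
  (stab2 : forall (i : 'I_K) (x : R) (t : nat), 0 < x -> (0 < t)%N ->
      (P [set w | exists v : V, iota v = ecdf t (fun s => X i s w) /\ (x <= `|v - g i|)%R]
        <= ((2 * expR (- (a * t%:R * x ^+ 2)))%R)%:E)%E) :
  forall v1 v2 : V,
    (exists p, in_simplex p /\ iota v1 = Fmix F p) ->
    (exists p, in_simplex p /\ iota v2 = Fmix F p) ->
    `|U v1 - U v2| <=
      b * (1 + \big[Num.max/0]_(i < K) \big[Num.max/0]_(j < K) (`|g i - g j| `^ (q - 1)))
        * `|v1 - v2|.
Proof.
move=> v1 v2 hv1 hv2; have [[p [hp e1]] [p' [hp' e2]]] := (hv1, hv2).
pose gap (k : 'I_K * 'I_K) := `|g k.1 - g k.2|.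
have [k _ gap_max] := @arg_maxP _ _ _ (Ordinal hK, Ordinal hK) xpredT gap isT.
have dist_le : `|v1 - v2| <= gap k.
  rewrite (mixture_representation iota_add iota_scale iota_inj hg e1).
  rewrite (mixture_representation iota_add iota_scale iota_inj hg e2).
  by apply: norm_mixture_diff_le => // i j; apply: (gap_max (i, j)).
have dist_pow_le : `|v1 - v2| `^ (q - 1) <=
    \big[Num.max/0]_(i < K) \big[Num.max/0]_(j < K) (`|g i - g j| `^ (q - 1)).
  apply: le_trans (le_bigmax _ _ k.1); apply: le_trans (le_bigmax _ _ k.2).
  by apply: ge0_ler_powR; rewrite ?nnegrE ?subr_ge0.
apply: le_trans (stab1 _ _ hv1 (or_introl hv2)) _.
rewrite -mulrA; apply: ler_wpM2l; first exact: ltW.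
exact: addr_powR_le_mul.
Qed.
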